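(* Let $\mathcal A$ be an algebra over a field $k$ and let $S$ be a commutative, associative, unital $k$-algebra. Then $$\mathcal D(\mathcal A\otimes S)=\mathcal D_S(\mathcal A\otimes S)\oplus\mathcal D_{\mathcal A\otimes 1}(\mathcal A\otimes S),$$ a direct sum of vector spaces.
   Context: An algebra over $k$ is a $k$-vector space with a bilinear product (not necessarily associative). $\mathcal D(\mathcal B)$ denotes the Lie algebra of derivations of an algebra $\mathcal B$. The algebra $\mathcal A\otimes S$ has product $(a\otimes s)(a'\otimes s')=aa'\otimes ss'$ and is an $S$-bimodule via $s'\cdot(a\otimes s)=(a\otimes s)\cdot s'=a\otimes ss'$. $\mathcal D_S(\mathcal A\otimes S)$ is the set of $d\in\mathcal D(\mathcal A\otimes S)$ with $d(a\otimes ss')=s'd(a\otimes s)$ for all $a\in\mathcal A$, $s,s'\in S$. $\mathcal D_{\mathcal A\otimes 1}(\mathcal A\otimes S)=\{\delta\in\mathcal D(\mathcal A\otimes S)\mid \delta(\mathcal A\otimes 1)=0\}$. *)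

From HB Require Import structures.
From mathcomp Require Import all_boot all_order all_algebra.
Set Implicit Arguments. Unset Strict Implicit. Unset Printing Implicit Defensive.
Import GRing.Theory.
Local Open Scope ring_scope.

Definition bilinear_map (k : fieldType) (U V W : lmodType k) (f : U -> V -> W) : Prop :=
  (forall v : V, linear (fun u => f u v)) /\ (forall u : U, linear (f u)).

Definition is_tensor_product (k : fieldType) (U V T : lmodType k)
    (tens : U -> V -> T) : Prop :=
  bilinear_map tens /\
  forall (W : lmodType k) (f : U -> V -> W), bilinear_map f ->
    exists g : T -> W, [/\ linear g,
      (forall u v, g (tens u v) = f u v) &
      (forall g' : T -> W, linear g' -> (forall u v, g' (tens u v) = f u v) ->
          forall t, g' t = g t)].

Definition is_derivation (k : fieldType) (B : lmodType k) (mulB : B -> B -> B)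
    (d : B -> B) : Prop :=
  linear d /\ forall x y, d (mulB x y) = mulB (d x) y + mulB x (d y).

Definition is_S_derivation (k : fieldType) (A : lmodType k) (S : comAlgType k)
    (T : lmodType k) (tens : A -> S -> T) (mulT : T -> T -> T)
    (actT : S -> T -> T) (d : T -> T) : Prop :=
  is_derivation mulT d /\
  forall a (s s' : S), d (tens a (s * s')) = actT s' (d (tens a s)).

Definition is_A1_derivation (k : fieldType) (A : lmodType k) (S : comAlgType k)
    (T : lmodType k) (tens : A -> S -> T) (mulT : T -> T -> T) (d : T -> T) : Prop :=
  is_derivation mulT d /\ forall a, d (tens a 1) = 0.

(* Given a derivation d, the
   S-linear map d1 with d1 (a (x) s) = s . d (a (x) 1) is again a derivation, and
   it agrees with d on A (x) 1, so d - d1 kills A (x) 1. The sum is direct since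
   a (x) s = s . (a (x) 1): an S-linear map vanishing on A (x) 1 vanishes. *)

From HB Require Import structures.
From mathcomp Require Import all_boot all_order all_algebra.
Import GRing.Theory.
Local Open Scope ring_scope.

Section UnbundledLinear.
Context {k : fieldType} {U V W : lmodType k}.

Section Packed.
Context {f : U -> W}.
Hypothesis f_lin : linear f.

Let fL : {linear U -> W} := HB.pack f (GRing.isLinear.Build k U W *:%R f f_lin).

Lemma lin0 : f 0 = 0. Proof. exact: (linear0 fL). Qed.
Lemma linD : {morph f : x y / x + y}. Proof. exact: (linearD fL). Qed.
Lemma linB : {morph f : x y / x - y}. Proof. exact: (linearB fL). Qed.
Lemma linZ a : {morph f : x / a *: x}. Proof. exact: (linearZZ fL). Qed.

End Packed.

Lemma linear_comp {f : U -> V} {g : V -> W} :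
  linear f -> linear g -> linear (fun x => g (f x)).
Proof. by move=> f_lin g_lin a u v; rewrite f_lin g_lin. Qed.

Lemma linear_add {f g : U -> W} :
  linear f -> linear g -> linear (fun x => f x + g x).
Proof. by move=> f_lin g_lin a u v /=; rewrite f_lin g_lin scalerDr addrACA. Qed.

Lemma linear_sub {f g : U -> W} :
  linear f -> linear g -> linear (fun x => f x - g x).
Proof.
by move=> f_lin g_lin a u v /=; rewrite f_lin g_lin scalerBr opprD addrACA.
Qed.

Lemma linear_zero : linear (fun _ : U => 0 : W).
Proof. by move=> a u v; rewrite scaler0 addr0. Qed.

End UnbundledLinear.

Section TensorProduct.
Context {k : fieldType} {A S T : lmodType k} {tens : A -> S -> T}.
Hypothesis tensP : is_tensor_product tens.

Lemma tensor_lift {W : lmodType k} {f : A -> S -> W} : bilinear_map f ->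
  exists g : T -> W, linear g /\ forall a s, g (tens a s) = f a s.
Proof.
by move=> f_bilin; have [g [g_lin gE _]] := tensP.2 W f f_bilin; exists g.
Qed.

Lemma tensor_linear_ext {W : lmodType k} (g1 g2 : T -> W) :
  linear g1 -> linear g2 -> (forall a s, g1 (tens a s) = g2 (tens a s)) ->
  g1 =1 g2.
Proof.
move=> g1_lin g2_lin g12E t; have [[tens_linl tens_linr] univ] := tensP.
have g1_bilin : bilinear_map (fun a s => g1 (tens a s)).
  by split=> [s|a]; apply: linear_comp.
have [g [_ _ g_uniq]] := univ W _ g1_bilin.
by rewrite (g_uniq g1) // (g_uniq g2) // => a s; rewrite g12E.
Qed.

Lemma tensor_bilinear_ext {W : lmodType k} (F G : T -> T -> W) :
  bilinear_map F -> bilinear_map G ->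
  (forall a s a' s', F (tens a s) (tens a' s') = G (tens a s) (tens a' s')) ->
  forall x y, F x y = G x y.
Proof.
move=> [F_linl F_linr] [G_linl G_linr] FGE x y.
apply: (tensor_linear_ext (F^~ y) (G^~ y)) => // a s.
exact: (tensor_linear_ext (F (tens a s)) (G (tens a s))).
Qed.

End TensorProduct.

Section TensorAlgebra.
Context {k : fieldType} {A : lmodType k} {mulA : A -> A -> A} {S : comAlgType k}.
Context {T : lmodType k} {tens : A -> S -> T} {mulT : T -> T -> T}.
Context {actT : S -> T -> T}.
Hypothesis tensP : is_tensor_product tens.
Hypothesis mulT_bilin : bilinear_map mulT.
Hypothesis mulT_tens : forall a a' (s s' : S),
  mulT (tens a s) (tens a' s') = tens (mulA a a') (s * s').
Hypothesis actT_lin : forall s : S, linear (actT s).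
Hypothesis actT_tens : forall a (s s' : S), actT s' (tens a s) = tens a (s * s').

Lemma actT1 : actT 1 =1 id.
Proof. by apply: (tensor_linear_ext tensP) => // a s; rewrite actT_tens mulr1. Qed.

Lemma actTA s s' t : actT s (actT s' t) = actT (s' * s) t.
Proof.
move: t; apply: (tensor_linear_ext tensP) => [|//|a s0]; first exact: linear_comp.
by rewrite !actT_tens mulrA.
Qed.

Lemma actT_scalar_linear t : linear (actT ^~ t).
Proof.
move=> c u v; move: t; apply: (tensor_linear_ext tensP) => [//| |a s].
  by apply: linear_add => // b x y; rewrite actT_lin scalerDr !scalerA mulrC.
have tens_lin : linear (tens a) by exact: tensP.1.2.
by rewrite /= !actT_tens mulrDr -scalerAr (linD tens_lin) (linZ tens_lin).
Qed.

Lemma actT_mull s u v : actT s (mulT u v) = mulT (actT s u) v.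
Proof.
have [mulT_linl mulT_linr] := mulT_bilin.
move: u v; apply: (tensor_bilinear_ext tensP (fun u v => actT s (mulT u v))
                                  (fun u v => mulT (actT s u) v)).
- by split=> [y|x] /=; apply: linear_comp.
- split=> [y|x]; last exact: mulT_linr.
  exact: linear_comp (actT_lin s) (mulT_linl y).
by move=> a s0 a' s'; rewrite mulT_tens !actT_tens mulT_tens -!mulrA [s' * s]mulrC.
Qed.

Lemma actT_mulr s u v : actT s (mulT u v) = mulT u (actT s v).
Proof.
have [mulT_linl mulT_linr] := mulT_bilin.
move: u v; apply: (tensor_bilinear_ext tensP (fun u v => actT s (mulT u v))
                                  (fun u v => mulT u (actT s v))).
- by split=> [y|x] /=; apply: linear_comp.
- by split=> [y|x] /=; [exact: mulT_linl | apply: linear_comp].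
by move=> a s0 a' s'; rewrite mulT_tens !actT_tens mulT_tens -!mulrA.
Qed.

Lemma derivation_sub (d d' : T -> T) :
  is_derivation mulT d -> is_derivation mulT d' ->
  is_derivation mulT (fun x => d x - d' x).
Proof.
have [mulT_linl mulT_linr] := mulT_bilin.
move=> [d_lin dM] [d'_lin d'M]; split; first exact: linear_sub.
move=> x y /=; rewrite dM d'M (linB (mulT_linl y)) (linB (mulT_linr x)).
by rewrite opprD addrACA.
Qed.

Lemma S_extension_derivation (d d1 : T -> T) :
  is_derivation mulT d -> linear d1 ->
  (forall a s, d1 (tens a s) = actT s (d (tens a 1))) ->
  is_derivation mulT d1.
Proof.
have [mulT_linl mulT_linr] := mulT_bilin.
move=> [d_lin dM] d1_lin d1E; split=> //.
apply: (tensor_bilinear_ext tensP (fun x y => d1 (mulT x y))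
                   (fun x y => mulT (d1 x) y + mulT x (d1 y))).
- by split=> [y|x] /=; apply: linear_comp.
- split=> [y|x] /=; apply: linear_add.
  + exact: linear_comp d1_lin (mulT_linl y).
  + exact: mulT_linl.
  + exact: mulT_linr.
  + exact: linear_comp.
move=> a s a' s'; rewrite mulT_tens !d1E.
have -> : tens (mulA a a') 1 = mulT (tens a 1) (tens a' 1) by rewrite mulT_tens mulr1.
rewrite dM (linD (actT_lin _)); congr (_ + _).
  by rewrite -actTA actT_mull actT_mulr actT_tens mul1r.
by rewrite mulrC -actTA actT_mulr actT_mull actT_tens mul1r.
Qed.

Lemma S_derivation_extension (d : T -> T) : is_derivation mulT d ->
  exists d1 : T -> T, is_S_derivation tens mulT actT d1 /\
    forall a s, d1 (tens a s) = actT s (d (tens a 1)).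
Proof.
move=> d_der; have d_lin := d_der.1.
have lift_bilin : bilinear_map (fun a s => actT s (d (tens a 1))).
  split=> [s|a]; last exact: actT_scalar_linear.
  exact: linear_comp (linear_comp (tensP.1.1 1) d_lin) (actT_lin s).
have [d1 [d1_lin d1E]] := tensor_lift tensP lift_bilin.
exists d1; split=> //; split; first exact: S_extension_derivation d1E.
by move=> a s s'; rewrite !d1E actTA.
Qed.

Lemma S_derivation_A1_eq0 (d : T -> T) :
  is_S_derivation tens mulT actT d -> is_A1_derivation tens mulT d ->
  d =1 (fun=> 0).
Proof.
move=> [[d_lin _] dS] [_ d_A1]; apply: (tensor_linear_ext tensP) => [//| |a s].
  exact: linear_zero.
by rewrite -[s]mul1r dS d_A1 lin0.
Qed.

End TensorAlgebra.

Theorem lemma2p1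
  (k : fieldType)
  (A : lmodType k) (mulA : A -> A -> A) (HmulA : bilinear_map mulA)
  (S : comAlgType k)
  (T : lmodType k) (tens : A -> S -> T) (Htens : is_tensor_product tens)
  (mulT : T -> T -> T) (HmulT : bilinear_map mulT)
  (HmulT_tens : forall a a' (s s' : S),
      mulT (tens a s) (tens a' s') = tens (mulA a a') (s * s'))
  (actT : S -> T -> T) (HactT : forall s : S, linear (actT s))
  (HactT_tens : forall a (s s' : S), actT s' (tens a s) = tens a (s * s')) :
  (forall d : T -> T, is_derivation mulT d ->
     exists d1 d2 : T -> T,
       [/\ is_S_derivation tens mulT actT d1,
           is_A1_derivation tens mulT d2 &
           forall t, d t = d1 t + d2 t])
  /\
  (forall d : T -> T, is_S_derivation tens mulT actT d ->
     is_A1_derivation tens mulT d -> forall t, d t = 0).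
Proof.
split; last exact: S_derivation_A1_eq0.
move=> d d_der.
have [d1 [d1_Sder d1E]] :=
  S_derivation_extension Htens HmulT HmulT_tens HactT HactT_tens d d_der.
exists d1, (fun t => d t - d1 t); split=> //.
- split; first exact: derivation_sub d1_Sder.1.
  by move=> a /=; rewrite d1E (actT1 Htens HactT HactT_tens) subrr.
- by move=> t /=; rewrite addrC subrK.
Qed.
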